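(* Let $X\subset\mathbb{R}$, let $\delta>0$ and let $f,g\in C_u(X)$ with $g>0$ and $\|g\|_\infty\le\delta$. Then $N_\delta(\mathrm{graph}(f+g))\ge\frac12 N_\delta(\mathrm{graph}(f))$.
   Context: $C_u(X)$ is the set of uniformly continuous real functions on $X$, $\|\cdot\|_\infty$ is the sup norm on $X$, and $\mathrm{graph}(h)=\{(x,h(x)):x\in X\}$. For $F\subset\mathbb{R}^2$, $N_\delta(F)$ is the number of boxes $B_i^j=[i\delta,(i+1)\delta)\times[j\delta,(j+1)\delta)$ ($i,j\in\mathbb{Z}$) of the disjoint $\delta$-mesh that intersect $F$. *)

From HB Require Import structures.
From mathcomp Require Import all_boot all_order all_algebra.
From mathcomp Require Import all_classical all_reals all_analysis.
Set Implicit Arguments. Unset Strict Implicit. Unset Printing Implicit Defensive.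
Import Order.TTheory GRing.Theory Num.Theory.
Local Open Scope classical_set_scope.
Local Open Scope ring_scope.

Definition unif_cont_on (R : realType) (X : set R) (h : R -> R) : Prop :=
  forall e : R, 0 < e -> exists d : R, 0 < d /\
    forall x y, X x -> X y -> `|x - y| < d -> `|h x - h y| < e.

Definition graph (R : realType) (X : set R) (h : R -> R) : set (R * R) :=
  [set p | exists2 x, X x & p = (x, h x)].

Definition box (R : realType) (d : R) (ij : int * int) : set (R * R) :=
  [set p | ij.1%:~R * d <= p.1 < (ij.1 + 1)%:~R * d /\
           ij.2%:~R * d <= p.2 < (ij.2 + 1)%:~R * d].

(* N_d(F): number of mesh boxes meeting F, as an extended real (may be +oo). *)
Definition Ndelta (R : realType) (d : R) (F : set (R * R)) : \bar R :=
  (\esum_(ij in [set ij : int * int | box d ij `&` F !=set0]) 1)%E.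

From HB Require Import structures.
From mathcomp Require Import all_boot all_order all_algebra.
From mathcomp Require Import all_classical all_reals all_analysis.
From mathcomp Require Import lra.
Import Order.TTheory GRing.Theory Num.Theory.
Local Open Scope classical_set_scope.
Local Open Scope ring_scope.

(* Raising a point of a mesh box by at most delta lands either in the same box
   or in the box just above it. Hence every box meeting graph(f) either meets
   graph(f+g) or lies directly below a box meeting graph(f+g); since moving a
   box down is injective, N(graph f) <= 2 N(graph(f+g)). *)

Lemma esum1_le_setU (R : realType) (T : choiceType) (A B C : set T) :
  A `<=` B `|` C ->
  (\esum_(i in A) (1 : \bar R) <= \esum_(i in B) 1 + \esum_(i in C) 1)%E.
Proof.
move=> sub.
rewrite esum_mkcond (esum_mkcond B) (esum_mkcond C) -esumD; last 2 first.
- by move=> i _; case: ifP.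
- by move=> i _; case: ifP.
apply: le_esum => i _.
case: ifPn => [/set_mem /sub [Bi|Ci]|_].
- by rewrite (mem_set Bi) leeDl //; case: ifP.
- by rewrite (mem_set Ci) leeDr //; case: ifP.
- by rewrite adde_ge0 //; case: ifP.
Qed.

Lemma half_le_of_le_double (R : realType) (a b : \bar R) :
  (0 <= a)%E -> (0 <= b)%E -> (a <= b + b)%E -> (2^-1%:E * a <= b)%E.
Proof.
case: b => [b| |//] a0 b0 ab; last by rewrite leey.
case: a a0 ab => [a| |//] a0; last by rewrite -EFinD leye_eq.
rewrite -EFinD -EFinM !lee_fin => h.
by rewrite mulrC ler_pdivrMr // mulr_natr mulr2n.
Qed.

Lemma box_raise {R : realType} {d : R} {i j : int} {x y t : R} :
  0 <= t <= d -> box d (i, j) (x, y) ->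
  box d (i, j) (x, y + t) \/ box d (i, j + 1) (x, y + t).
Proof.
move=> /andP[t0 td] [/= xij /andP[yl yu]].
have [lt|ge] := ltP (y + t) ((j + 1)%:~R * d).
  by left; split => //=; rewrite lt andbT (le_trans yl) // lerDl.
right; split => //=; apply/andP; split => //.
move: yu; rewrite !intrD !mulrDl !mul1r => yu; lra.
Qed.

Theorem lemma2 (R : realType) (X : set R) (delta : R) (f g : R -> R) :
  0 < delta ->
  unif_cont_on X f -> unif_cont_on X g ->
  (forall x, X x -> 0 < g x) ->
  (forall x, X x -> `|g x| <= delta) ->
  (Ndelta delta (graph X (fun x => f x + g x)%R) >= 2^-1%:E * Ndelta delta (graph X f))%E.
Proof.
move=> _ _ _ gpos gle.
set A := [set ij | box delta ij `&` graph X f !=set0].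
set B := [set ij | box delta ij `&` graph X (fun x => f x + g x) !=set0].
pose down (ij : int * int) := (ij.1, ij.2 - 1).
have down_inj : set_inj B down.
  by move=> [a b] [c e] _ _ [-> /eqP]; rewrite subr_eq subrK => /eqP ->.
have AB : A `<=` B `|` down @` B.
  move=> [i j] [p [bx [x Xx pE]]]; rewrite {p}pE in bx.
  have g0d : 0 <= g x <= delta.
    by rewrite ltW ?gpos //= -(ger0_norm (ltW (gpos x Xx))) gle.
  have graph_fg : graph X (fun x => f x + g x) (x, f x + g x) by exists x.
  case: (box_raise g0d bx) => [bx'|bx']; first by left; exists (x, f x + g x).
  by right; exists (i, j + 1); [exists (x, f x + g x) | rewrite /down /= addrK].
have := esum1_le_setU R _ _ _ _ AB; rewrite esum_image // /Ndelta -/A -/B.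
by apply: half_le_of_le_double; exact: esum_ge0.
Qed.
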